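(* Let $\phi\in\mathrm{Aut}_0(H)$. Then $\phi(H(m))\subseteq\sum_{i=0}^mH(i)$ for all $m\geq0$.
   Context: Let $k$ be a field and $0\neq q\in k$ not a root of unity. $H=k_q[x,x^{-1},y]$ is the $k$-algebra generated by $x,x^{-1},y$ with $xx^{-1}=x^{-1}x=1$, $yx=qxy$, a Hopf algebra with $\Delta(x)=x\otimes x$, $\Delta(x^{-1})=x^{-1}\otimes x^{-1}$, $\Delta(y)=y\otimes x+1\otimes y$, $\varepsilon(x)=1$, $\varepsilon(y)=0$; $\{x^ny^m:n\in\mathbb{Z},m\in\mathbb{N}\}$ is a $k$-basis. $H_0=\mathrm{span}\{x^n:n\in\mathbb{Z}\}$ and $H(m)=H_0y^m$. $\mathrm{Aut}_0(H)$ is the group of coalgebra automorphisms $\phi$ of $H$ with $\phi(1)=1$. *)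

(* H = k_q[x,x^-1,y] is modelled as the free k-module on the
   basis {x^n y^m : n : int, m : nat}, i.e. finitely supported functions
   (int * nat) -> k ({malg k[int * nat]} from multinomials' monalg);
   H (x) H is the free module on pairs of basis elements. *)
From HB Require Import structures.
From mathcomp Require Import all_boot all_algebra.
From mathcomp Require Import finmap.
From mathcomp.multinomials Require Import monalg.
Set Implicit Arguments. Unset Strict Implicit. Unset Printing Implicit Defensive.
Import GRing.Theory.
Local Open Scope ring_scope.

Section QPlane.
Variables (k : fieldType) (q : k).

(* basis index (n, m) stands for x^n y^m *)
Definition Kb := (int * nat)%type.
Definition HH := {malg k[Kb]}.
(* basis index (a, b) of H (x) H stands for (x^a.1 y^a.2) (x) (x^b.1 y^b.2) *)
Definition TT := {malg k[(Kb * Kb)%type]}.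

(* Multiplication on H (x) H (tensor product algebra), using
   y^b x^c = q^(b c) x^c y^b in each factor. *)
Definition twist (s t : Kb * Kb) : k :=
  q ^ ((s.1.2)%:Z * t.1.1 + (s.2.2)%:Z * t.2.1).
Definition kmul (s t : Kb * Kb) : Kb * Kb :=
  ((s.1.1 + t.1.1, (s.1.2 + t.1.2)%N), (s.2.1 + t.2.1, (s.2.2 + t.2.2)%N)).
Definition mulT (u v : TT) : TT :=
  \sum_(s <- msupp u) \sum_(t <- msupp v)
     << u@_s * v@_t * twist s t *g kmul s t >>.
Definition oneT : TT := << ((0, 0%N), (0, 0%N)) >>.
Definition powT (u : TT) (m : nat) : TT := iter m (mulT u) oneT.

(* Delta(x) = x (x) x, Delta(x^-1) = x^-1 (x) x^-1, Delta(y) = y (x) x + 1 (x) y *)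
Definition DxT : TT := << ((1, 0%N), (1, 0%N)) >>.
Definition DxiT : TT := << ((-1, 0%N), (-1, 0%N)) >>.
Definition DyT : TT := << ((0, 1%N), (1, 0%N)) >> + << ((0, 0%N), (0, 1%N)) >>.
Definition DeltaXpow (n : int) : TT :=
  match n with Posz j => powT DxT j | Negz j => powT DxiT j.+1 end.

Definition Delta (f : HH) : TT :=
  \sum_(a <- msupp f) f@_a *: mulT (DeltaXpow a.1) (powT DyT a.2).
(* eps(x^n y^m) = eps(x)^n eps(y)^m = 1^n 0^m *)
Definition eps (f : HH) : k := \sum_(a <- msupp f) f@_a * (0 ^+ a.2).

Definition tensor (u v : HH) : TT :=
  \sum_(a <- msupp u) \sum_(b <- msupp v) << u@_a * v@_b *g (a, b) >>.
Definition tmap (f g : HH -> HH) (t : TT) : TT :=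
  \sum_(s <- msupp t) t@_s *: tensor (f << s.1 >>) (g << s.2 >>).

Definition oneH : HH := << (0, 0%N) >>.

Definition isAut0 (phi : HH -> HH) : Prop :=
  [/\ (forall (c : k) (u v : HH), phi (c *: u + v) = c *: phi u + phi v),
      bijective phi,
      (forall h : HH, Delta (phi h) = tmap phi phi (Delta h)),
      (forall h : HH, eps (phi h) = eps h)
    & phi oneH = oneH].

(* h \in H(m) = H_0 y^m *)
Definition inHm (m : nat) (h : HH) : Prop := forall a, a \in msupp h -> a.2 = m.
Definition inHle (m : nat) (h : HH) : Prop :=
  forall a, a \in msupp h -> (a.2 <= m)%N.

End QPlane.

(* Only the comultiplicativity Delta o phi = (phi (x) phi) o Delta and the fact
   that q is not a root of unity are needed.  Group-like elements lie in H(0),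
   since g (x) g = Delta g would double the top y-degree of g; hence phi(x^n)
   lies in H(0).  In Delta(x^n y^(d+1)) the term x^n y (x) x^(n+1) y^d has
   coefficient the q-integer [d+1]_q, which is nonzero, and no other basis
   element of H contributes to it.  Argue by strong induction on m: if phi(h),
   h in H(m), had a term x^n y^(d+1) with d >= m, then x^n y (x) x^(n+1) y^d
   occurs in Delta(phi h) = (phi (x) phi)(Delta h), hence in some
   phi(x^a y^i) (x) phi(x^b y^j) with i + j = m.  Then i > 0 because phi(x^a)
   lies in H(0), so j < m and by induction phi(x^b y^j) has y-degree at most
   j < m <= d, a contradiction. *)

From mathcomp Require Import all_boot all_algebra.
From mathcomp Require Import finmap.
From mathcomp.multinomials Require Import monalg.
From mathcomp Require Import ring.
Set Implicit Arguments.
Unset Strict Implicit.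
Unset Printing Implicit Defensive.
Import GRing.Theory.
Local Open Scope ring_scope.

Section MalgSupport.
Variables (K : choiceType) (G : zmodType).

Lemma msupp_sum (I : eqType) (r : seq I) (F : I -> {malg G[K]}) c :
  c \in msupp (\sum_(i <- r) F i) -> exists2 i, i \in r & c \in msupp (F i).
Proof.
rewrite -mcoeff_neq0 raddf_sum /=.
case: (boolP (has (fun i => c \in msupp (F i)) r)) => [/hasP //|/hasPn nF].
by rewrite big1_seq ?eqxx // => i /andP[_ /nF]; rewrite -mcoeff_eq0 => /eqP.
Qed.

Lemma msuppU_in (x : G) (a c : K) : c \in msupp << x *g a >> -> c = a.
Proof. by move/(fsubsetP msuppU_le); rewrite inE => /eqP. Qed.

Lemma big_msupp_pick (V : zmodType) (g : {malg G[K]}) (F : K -> V) a :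
  (a \notin msupp g -> F a = 0) -> \sum_(t <- msupp g) F t *+ (t == a) = F a.
Proof.
move=> Fa; case: (boolP (a \in msupp g)) => [ag|/Fa Fa0].
  rewrite (big_fsetD1 a) //= eqxx mulr1n big1_fset ?addr0 // => t.
  by rewrite in_fsetD1 => /andP[/negbTE -> _]; rewrite mulr0n.
by rewrite Fa0 big1_fset // => t _ _; case: eqP => [->|]; rewrite ?Fa0 ?mulr0n.
Qed.

End MalgSupport.

Lemma msupp_basis (R : nzRingType) (K : choiceType) (a : K) :
  msupp (<< a >> : {malg R[K]}) = [fset a]%fset.
Proof. by rewrite msuppU oner_eq0. Qed.

Lemma msuppZ_in (R : nzRingType) (K : choiceType) (g : {malg R[K]}) (x : R) c :
  c \in msupp (x *: g) -> c \in msupp g.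
Proof. exact: (fsubsetP (msuppZ_le x g)). Qed.

Section TensorSquare.
Variables (k : fieldType) (q : k).
Local Notation TT := (TT k).

Lemma kmulI s : injective (kmul s).
Proof.
case: s => [[a b] [c d]] [[a1 b1] [c1 d1]] [[a2 b2] [c2 d2]].
by case=> /addrI -> /addnI -> /addrI -> /addnI ->.
Qed.

Lemma coef_mulTw (d : {fset Kb * Kb}) (u v : TT) c : (msupp u `<=` d)%fset ->
  (mulT q u v)@_c = \sum_(s <- d) \sum_(t <- msupp v)
      u@_s * v@_t * twist q s t *+ (kmul s t == c).
Proof.
move=> sub_ud; rewrite /mulT raddf_sum /= (big_fset_incl _ sub_ud); last first.
  move=> s _ /mcoeff_outdom us0; rewrite raddf_sum big1_fset // => t _ _ /=.
  by rewrite mcoeffU us0 !mul0r mul0rn.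
apply: eq_bigr => s _; rewrite raddf_sum /=; apply: eq_bigr => t _.
by rewrite mcoeffU.
Qed.

Lemma mulTDl (u1 u2 v : TT) : mulT q (u1 + u2) v = mulT q u1 v + mulT q u2 v.
Proof.
apply/malgP => c; rewrite mcoeffD.
set d := (msupp u1 `|` msupp u2)%fset.
have sub12 : (msupp (u1 + u2) `<=` d)%fset by exact: msuppD_le.
have sub1 : (msupp u1 `<=` d)%fset by exact: fsubsetUl.
have sub2 : (msupp u2 `<=` d)%fset by exact: fsubsetUr.
rewrite [LHS](coef_mulTw v c sub12) [X in _ = X + _](coef_mulTw v c sub1).
rewrite [X in _ = _ + X](coef_mulTw v c sub2) -big_split; apply: eq_bigr => s _.
by rewrite -big_split; apply: eq_bigr => t _; rewrite mcoeffD !mulrDl mulrnDl.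
Qed.

Lemma coef_mulTU (s t : Kb * Kb) (v : TT) c :
  c = kmul s t -> (mulT q << s >> v)@_c = v@_t * twist q s t.
Proof.
move->; rewrite (@coef_mulTw [fset s]%fset) ?msupp_basis // big_seq_fset1 mcoeffUU.
under eq_bigr do rewrite mul1r (inj_eq (@kmulI s)).
by apply: big_msupp_pick => /mcoeff_outdom ->; rewrite mul0r.
Qed.

Lemma msupp_mulT (u v : TT) c : c \in msupp (mulT q u v) ->
  exists s t, [/\ s \in msupp u, t \in msupp v & c = kmul s t].
Proof. by move/msupp_sum => [s us /msupp_sum [t vt /msuppU_in ->]]; exists s, t. Qed.

Lemma coef_mulTU_out (s : Kb * Kb) (v : TT) c :
  (forall t, kmul s t != c) -> (mulT q << s >> v)@_c = 0.
Proof.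
move=> c_out; apply/mcoeff_outdom/negP => /msupp_mulT [s' [t [/msuppU_in-> _]]].
by move/esym/eqP; rewrite (negbTE (c_out t)).
Qed.

Lemma mulTUU s t : mulT q << s >> << t >> = << twist q s t *g kmul s t >>.
Proof.
apply/malgP => c; have [-> | c_out] := eqVneq c (kmul s t).
  by rewrite (coef_mulTU _ erefl) !mcoeffUU mul1r.
rewrite mcoeffU eq_sym (negbTE c_out); apply/mcoeff_outdom/negP.
case/msupp_mulT => s' [t' [/msuppU_in-> /msuppU_in-> c_st]].
by rewrite c_st eqxx in c_out.
Qed.

End TensorSquare.

Section Comultiplication.
Variables (k : fieldType) (q : k).
Local Notation HH := (HH k).
Local Notation powDy := (powT q (DyT k)).

Lemma powTS (u : TT k) j : powT q u j.+1 = mulT q u (powT q u j).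
Proof. by []. Qed.

Lemma twist_x (a b : int) t : twist q ((a, 0%N), (b, 0%N)) t = 1.
Proof. by rewrite /twist /= !mul0r addr0 expr0z. Qed.

Lemma powT_x (a b : int) j :
  powT q << ((a, 0%N), (b, 0%N)) >> j = << ((a *+ j, 0%N), (b *+ j, 0%N)) >>.
Proof.
elim: j => [|j IH]; first by rewrite !mulr0n.
rewrite powTS IH mulTUU twist_x; congr << _ >>.
by rewrite /kmul /= -!mulrS.
Qed.

Lemma DeltaXpowE n : DeltaXpow q n = << ((n, 0%N), (n, 0%N)) >>.
Proof. by case: n => j; rewrite /DeltaXpow powT_x ?NegzE ?mulNrn -natz. Qed.

Lemma DeltaU (a : Kb) :
  Delta q << a >> = mulT q << ((a.1, 0%N), (a.1, 0%N)) >> (powDy a.2).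
Proof. by rewrite /Delta msupp_basis big_seq_fset1 mcoeffUU scale1r DeltaXpowE. Qed.

Lemma Delta_x (n : int) : Delta q << (n, 0%N) >> = << ((n, 0%N), (n, 0%N)) >>.
Proof. by rewrite DeltaU mulTUU twist_x; congr << _ >>; rewrite /kmul /= addr0. Qed.

Definition y_x : Kb * Kb := ((0, 1%N), (1, 0%N)).
Definition one_y : Kb * Kb := ((0, 0%N), (0, 1%N)).

Lemma powDyS m : powDy m.+1 = mulT q << y_x >> (powDy m) + mulT q << one_y >> (powDy m).
Proof. exact: mulTDl. Qed.

Lemma twist_y_x a b c d : twist q y_x ((a, b), (c, d)) = q ^ a.
Proof. by rewrite /twist /= mul0r addr0 mul1r. Qed.

Lemma twist_one_y a b c d : twist q one_y ((a, b), (c, d)) = q ^ c.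
Proof. by rewrite /twist /= mul0r add0r mul1r. Qed.

Lemma msupp_powDy m t : t \in msupp (powDy m) -> t.1.1 = 0 /\ (t.1.2 + t.2.2 = m)%N.
Proof.
elim: m t => [|m IH] t; first by rewrite msupp_basis inE => /eqP ->.
rewrite powDyS => /(fsubsetP (msuppD_le _ _)); rewrite inE.
case/orP=> /msupp_mulT [s [t' []]]; rewrite msupp_basis inE => /eqP -> /IH [].
  by case: t' => [[a1 b1] [a2 b2]] /= -> <- ->; rewrite /= add0r add0n.
by case: t' => [[a1 b1] [a2 b2]] /= -> <- ->; rewrite /= add0r add0n addnCA.
Qed.

Lemma coef_powDy_0 m : (powDy m)@_((0, 0%N), (0, m)) = 1.
Proof.
elim: m => [|m IH]; first exact: mcoeffUU.
rewrite powDyS mcoeffD [X in X + _]coef_mulTU_out ?add0r; last first.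
  by move=> t; apply/eqP => /(congr1 (fun c => c.1.2)).
by rewrite (@coef_mulTU _ q one_y ((0, 0%N), (0, m))) // IH twist_one_y expr0z mulr1.
Qed.

(* The coefficient of y (x) x y^m in Delta(y^(m+1)) is the q-integer [m+1]_q. *)
Lemma coef_powDy_1 m : (powDy m.+1)@_((0, 1%N), (1, m)) * (q - 1) = q ^+ m.+1 - 1.
Proof.
elim: m => [|m IH].
  rewrite powDyS mcoeffD [X in _ + X]coef_mulTU_out; last first.
    by move=> t; apply/eqP => /(congr1 (fun c => c.2.2)).
  rewrite (@coef_mulTU _ q y_x ((0, 0%N), (0, 0%N))) // (coef_powDy_0 0).
  by rewrite twist_y_x expr0z mulr1 addr0 mul1r expr1.
rewrite powDyS mcoeffD.
rewrite [X in X + _](@coef_mulTU _ q y_x ((0, 0%N), (0, m.+1))) //.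
rewrite [X in _ + X](@coef_mulTU _ q one_y ((0, 1%N), (1, m))) // coef_powDy_0.
rewrite twist_y_x twist_one_y expr0z expr1z mul1r.
by rewrite mulrDl mulrAC IH !exprS; ring.
Qed.

Lemma coef_Delta_y_xy n m :
  (Delta q << (n, m.+1) >>)@_((n, 1%N), (n + 1, m)) * (q - 1) = q ^+ m.+1 - 1.
Proof.
rewrite DeltaU (@coef_mulTU _ q _ ((0, 1%N), (1, m))) ?twist_x ?mulr1 ?coef_powDy_1 //.
by rewrite /kmul /= addr0.
Qed.

Lemma msupp_DeltaU (a : Kb) c :
  c \in msupp (Delta q << a >>) -> c.1.1 = a.1 /\ (c.1.2 + c.2.2 = a.2)%N.
Proof.
rewrite DeltaU => /msupp_mulT [s [t []]]; rewrite msupp_basis inE => /eqP ->.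
by move=> /msupp_powDy [t11 tdeg] ->; rewrite /= t11 addr0 !add0n.
Qed.

Lemma msupp_Delta (f : HH) c : c \in msupp (Delta q f) ->
  exists2 a, a \in msupp f & c \in msupp (Delta q << a >>).
Proof.
by move/msupp_sum => [a fa /msuppZ_in]; rewrite DeltaXpowE -DeltaU; exists a.
Qed.

Lemma coef_Delta (f : HH) c :
  (Delta q f)@_c = \sum_(a <- msupp f) f@_a * (Delta q << a >>)@_c.
Proof.
rewrite {1}/Delta [LHS]raddf_sum; apply: eq_bigr => a _.
by rewrite [LHS]mcoeffZ DeltaU DeltaXpowE.
Qed.

Lemma msupp_Delta_y_xy (f : HH) n m : q ^+ m.+1 != 1 ->
  (n, m.+1) \in msupp f -> ((n, 1%N), (n + 1, m)) \in msupp (Delta q f).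
Proof.
move=> qm1 f_nm; rewrite -mcoeff_neq0 coef_Delta (big_fsetD1 _ f_nm) big1_fset.
  rewrite [X in X != 0]/= addr0; apply: mulf_neq0; first by rewrite mcoeff_neq0.
  apply: contraNneq qm1 => coef0.
  by rewrite -subr_eq0 -(coef_Delta_y_xy n m) coef0 mul0r.
move=> a; rewrite in_fsetD1 => /andP[a_ne _] _.
rewrite (@mcoeff_outdom _ _ (Delta q << a >>)) ?mulr0 //; apply: contra a_ne.
by case: a => a1 a2 /msupp_DeltaU [/= -> <-].
Qed.

End Comultiplication.

Section Tensor.
Variables (k : fieldType) (q : k).
Local Notation HH := (HH k).

Lemma coef_tensor (u v : HH) a b : (tensor u v)@_(a, b) = u@_a * v@_b.
Proof.
rewrite [LHS]raddf_sum.
transitivity (\sum_(x <- msupp u) (u@_x * v@_b) *+ (x == a)).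
  apply: eq_bigr => x _; rewrite [LHS]raddf_sum /=.
  under eq_bigr => y _ do rewrite mcoeffU xpair_eqE -mulnb mulrnA.
  by apply: big_msupp_pick => /mcoeff_outdom ->; rewrite mulr0 mul0rn.
by apply: big_msupp_pick => /mcoeff_outdom ->; rewrite mul0r.
Qed.

Lemma msupp_tensor (u v : HH) c :
  c \in msupp (tensor u v) -> c.1 \in msupp u /\ c.2 \in msupp v.
Proof. by move/msupp_sum => [a ua /msupp_sum [b vb /msuppU_in ->]]. Qed.

Lemma tmapU (f g : HH -> HH) s : tmap f g << s >> = tensor (f << s.1 >>) (g << s.2 >>).
Proof. by rewrite /tmap msupp_basis big_seq_fset1 mcoeffUU scale1r. Qed.

Lemma msupp_tmap (f g : HH -> HH) t c : c \in msupp (tmap f g t) ->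
  exists2 s, s \in msupp t & c.1 \in msupp (f << s.1 >>) /\ c.2 \in msupp (g << s.2 >>).
Proof. by move/msupp_sum => [s ts /msuppZ_in /msupp_tensor]; exists s. Qed.

(* (a, a) lies in the support of g (x) g = Delta g, which forces an element of
   doubled y-degree in the support of g: positive degrees would be unbounded. *)
Lemma grouplike_deg0 (g : HH) :
  Delta q g = tensor g g -> forall a, a \in msupp g -> a.2 = 0%N.
Proof.
move=> Dg.
have double a : a \in msupp g -> exists2 a', a' \in msupp g & a'.2 = (a.2 + a.2)%N.
  move=> ga; have : (a, a) \in msupp (Delta q g).
    by rewrite Dg -mcoeff_neq0 coef_tensor mulf_neq0 // mcoeff_neq0.
  by case/msupp_Delta => a' ga' /msupp_DeltaU [_ deg]; exists a'; rewrite // -deg.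
pose d := (\max_(a <- msupp g) a.2)%N.
have bound n a : a \in msupp g -> (a.2 * 2 ^ n <= d)%N.
  elim: n a => [|n IH] a ga; first by rewrite muln1; apply: leq_bigmax_seq.
  by have [a' ga' e] := double a ga; rewrite expnS mulnA muln2 -addnn -e; apply: IH.
move=> a ga; apply/eqP; rewrite -leqn0 leqNgt; apply/negP => a_pos.
have := bound d a ga; apply/negP; rewrite -ltnNge.
exact: leq_trans (ltn_expl d (ltnSn 1)) (leq_pmull _ a_pos).
Qed.

End Tensor.

Section Comultiplicative.
Variables (k : fieldType) (q : k) (phi : HH k -> HH k).
Hypothesis phi_Delta : forall h, Delta q (phi h) = tmap phi phi (Delta q h).
Hypothesis q_not_root1 : forall n : nat, (0 < n)%N -> q ^+ n != 1.

Lemma msupp_phi_x (n : int) a : a \in msupp (phi << (n, 0%N) >>) -> a.2 = 0%N.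
Proof. by apply: (grouplike_deg0 (q := q)); rewrite phi_Delta Delta_x tmapU. Qed.

Lemma phi_inHle m h : inHm m h -> inHle m (phi h).
Proof.
elim/ltn_ind: m h => m IH h hm [n [//|d]] phi_nd.
rewrite leqNgt ltnS; apply/negP => m_le_d.
have := msupp_Delta_y_xy (q_not_root1 (ltn0Sn d)) phi_nd; rewrite phi_Delta.
case/msupp_tmap => s /msupp_Delta [a ha /msupp_DeltaU [_ s_deg]] [phi_s1 phi_s2].
have s12_gt0 : (0 < s.1.2)%N.
  by case: s phi_s1 {s_deg phi_s2} => [[s11 [|s12]] s2] // /msupp_phi_x.
have s22_lt_m : (s.2.2 < m)%N by rewrite -(hm a ha) -s_deg -{1}(add0n s.2.2) ltn_add2r.
have s2_deg : inHm s.2.2 (<< s.2 >> : HH k) by move=> x /msuppU_in ->.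
have /= d_le_s22 := IH _ s22_lt_m _ s2_deg _ phi_s2.
by have := leq_ltn_trans (leq_trans m_le_d d_le_s22) s22_lt_m; rewrite ltnn.
Qed.

End Comultiplicative.

Theorem lemma2p7 (k : fieldType) (q : k) (hq0 : q != 0)
  (hq : forall n : nat, (0 < n)%N -> q ^+ n != 1)
  (phi : HH k -> HH k) (hphi : isAut0 q phi) :
  forall (m : nat) (h : HH k), inHm m h -> inHle m (phi h).
Proof. by case: hphi => _ _ phi_Delta _ _; exact: phi_inHle phi_Delta hq. Qed.
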